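(* Let $(p_n)$ be integers diverging to infinity and $(\kappa_n)$ a sequence in $(0,\infty)$ with $\kappa_n=o(p_n)$. Then $\sqrt{p_n\tilde e_{n2}}-1=O(\kappa_n^2/p_n^2)$ as $n\to\infty$.
   Context: For integer $p\ge2$ and $\kappa>0$, $c_{p,\kappa}=1/\int_{-1}^1(1-t^2)^{(p-3)/2}e^{\kappa t}dt$. $\tilde e_{n2}$ is the variance of the distribution on $[-1,1]$ with density $u\mapsto c_{p_n,\kappa_n}(1-u^2)^{(p_n-3)/2}e^{\kappa_nu}$. *)

From Stdlib Require Import Reals ClassicalEpsilon.
Open Scope R_scope.

(* Riemann integral of f over [a,b]; junk value 0 if f is not Riemann integrable. *)
Definition RInt (f : R -> R) (a b : R) : R :=
  match excluded_middle_informative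
          (exists I : R, exists pr : Riemann_integrable f a b, RiemannInt pr = I) with
  | left h => proj1_sig (constructive_indefinite_description _ h)
  | right _ => 0
  end.

(* (1 - t^2)^((p-3)/2), for integer p >= 2 and t in (-1,1):
   for p >= 3 this is sqrt(1-t^2)^(p-3); for p = 2 it is 1/sqrt(1-t^2). *)
Definition wgt (p : nat) (t : R) : R :=
  sqrt (1 - t ^ 2) ^ (p - 3) / sqrt (1 - t ^ 2) ^ (3 - p).

Definition dens0 (p : nat) (kappa : R) (t : R) : R := wgt p t * exp (kappa * t).

Definition c_pk (p : nat) (kappa : R) : R := 1 / RInt (dens0 p kappa) (-1) 1.

Definition mean_pk (p : nat) (kappa : R) : R :=
  RInt (fun u => u * (c_pk p kappa * dens0 p kappa u)) (-1) 1.

(* variance: \tilde e_{n2} = variance_pk p_n kappa_n *)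
Definition variance_pk (p : nat) (kappa : R) : R :=
  RInt (fun u => (u - mean_pk p kappa) ^ 2 * (c_pk p kappa * dens0 p kappa u)) (-1) 1.

(* Integrating the derivative of g(t) (1 - t^2)^((p-1)/2) e^(k t), which vanishes at t = +-1,
   gives the Stein identity  E[g'(T) (1 - T^2) - (p - 1) T g(T) + k g(T) (1 - T^2)] = 0.
   Taking g = 1, t, t^2 eliminates the odd moments and yields  p Var T - 1 = k^2 B  with
   B = Var(T^2) / (p + 1) - (3p - 1) / ((p + 1) (p - 1)^2) (1 - E T^2)^2.
   Since T lives in [-1, 1], Var(T^2) <= 4 Var T, so |B| <= 8 / p^2 as soon as 3 k <= p;
   finally |sqrt x - 1| <= |x - 1|. *)

From Pilot Require Import Defs.
From Stdlib Require Import Reals ClassicalEpsilon Lra Lia FunctionalExtensionality.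
From Coquelicot Require Import Coquelicot.
Open Scope R_scope.

Lemma Defs_RInt_eq_RInt (f : R -> R) (a b : R) :
  ex_RInt f a b -> Defs.RInt f a b = RInt f a b.
Proof.
  intros Hf. unfold Defs.RInt.
  destruct excluded_middle_informative as [h | h].
  - destruct (constructive_indefinite_description _ h) as [I [pr <-]]. simpl.
    symmetry. apply RInt_Reals.
  - exfalso. apply h. exists (RInt f a b), (ex_RInt_Reals_0 _ _ _ Hf).
    symmetry. apply RInt_Reals.
Qed.

Lemma continuous_Rmult (f g : R -> R) (x : R) :
  continuous f x -> continuous g x -> continuous (fun y => f y * g y) x.
Proof. exact (continuous_mult f g x). Qed.

Lemma continuous_pow (f : R -> R) (n : nat) (x : R) :
  continuous f x -> continuous (fun y => f y ^ n) x.
Proof.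
  intros Hf. induction n as [|n IH]; simpl.
  - apply continuous_const.
  - now apply continuous_Rmult.
Qed.

Lemma continuous_sqrt_one_sub_sq (x : R) : continuous (fun t => sqrt (1 - t ^ 2)) x.
Proof.
  apply continuous_sqrt_comp, (@ex_derive_continuous R_AbsRing R_NormedModule).
  auto_derive. auto.
Qed.

Lemma continuous_exp_scal (k x : R) : continuous (fun t => exp (k * t)) x.
Proof. apply (@ex_derive_continuous R_AbsRing R_NormedModule). auto_derive. auto. Qed.

Lemma is_derive_sub_mul (g : R -> R) (x : R) :
  continuous g x -> is_derive (fun y => (y - x) * g y) x (g x).
Proof.
  intros Hg. apply is_derive_Reals. intros eps Heps.
  apply continuity_pt_filterlim in Hg.
  destruct (Hg eps Heps) as [d [Hd Hgd]].
  exists (mkposreal d Hd). intros h Hh0 Hh. simpl in Hh.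
  replace ((x + h - x) * g (x + h) - (x - x) * g x) with (h * g (x + h)) by ring.
  replace (h * g (x + h) / h) with (g (x + h)) by (field; exact Hh0).
  apply Hgd. split.
  - split; [exact I | lra].
  - simpl. unfold R_dist. now replace (x + h - x) with h by ring.
Qed.

Lemma sqrt_pow_eq_mul (y : R) (m : nat) : (3 <= m)%nat -> sqrt y ^ m = y * sqrt y ^ (m - 2).
Proof.
  intros Hm. destruct (Rle_or_lt 0 y) as [Hy | Hy].
  - replace m with (2 + (m - 2))%nat at 1 by lia. now rewrite pow_add, pow2_sqrt.
  - rewrite sqrt_neg_0 by lra. rewrite !pow_i by lia. ring.
Qed.

Lemma is_derive_sqrt_pow (m : nat) (x : R) : (3 <= m)%nat ->
  is_derive (fun y => sqrt y ^ m) x (INR m / 2 * sqrt x ^ (m - 2)).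
Proof.
  intros Hm. destruct (Rtotal_order x 0) as [Hx | [Hx | Hx]].
  - rewrite (sqrt_neg_0 x) by lra. rewrite pow_i by lia. rewrite Rmult_0_r.
    apply is_derive_ext_loc with (fun _ => 0).
    + exists (mkposreal (- x) ltac:(lra)). intros y Hy.
      apply Rabs_def2 in Hy. unfold minus, plus, opp in Hy. simpl in Hy.
      rewrite sqrt_neg_0 by lra. rewrite pow_i by lia. reflexivity.
    + apply is_derive_Reals, derivable_pt_lim_const.
  - subst x. rewrite sqrt_0, pow_i by lia. rewrite Rmult_0_r.
    apply is_derive_ext with (fun y => (y - 0) * sqrt y ^ (m - 2)).
    + intros y. rewrite Rminus_0_r. symmetry. now apply sqrt_pow_eq_mul.
    + assert (H := is_derive_sub_mul (fun y => sqrt y ^ (m - 2)) 0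
        (continuous_pow _ _ _ (continuous_sqrt_comp _ _ (continuous_id 0)))).
      simpl in H. now rewrite sqrt_0, pow_i in H by lia.
  - assert (Hs : 0 < sqrt x) by (apply sqrt_lt_R0; lra).
    replace (INR m / 2 * sqrt x ^ (m - 2)) with (INR m * / (2 * sqrt x) * sqrt x ^ Nat.pred m).
    + apply is_derive_pow, is_derive_Reals, derivable_pt_lim_sqrt, Hx.
    + replace (Nat.pred m) with (S (m - 2)) by lia. simpl. field. lra.
Qed.

Definition quartic (c0 c1 c2 c3 c4 t : R) : R :=
  c0 + c1 * t + c2 * t ^ 2 + c3 * t ^ 3 + c4 * t ^ 4.

Lemma continuous_quartic (c0 c1 c2 c3 c4 x : R) : continuous (quartic c0 c1 c2 c3 c4) x.
Proof.
  apply (@ex_derive_continuous R_AbsRing R_NormedModule). unfold quartic. auto_derive. auto.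
Qed.

Definition moment (p : nat) (k : R) (j : nat) : R := RInt (fun t => t ^ j * dens0 p k t) (-1) 1.

Section Moments.

Variables (p : nat) (k : R).
Hypothesis hp : (3 <= p)%nat.

Lemma dens0_eq : dens0 p k = fun t => sqrt (1 - t ^ 2) ^ (p - 3) * exp (k * t).
Proof.
  apply functional_extensionality. intros t. unfold dens0, wgt.
  replace (3 - p)%nat with 0%nat by lia. simpl. field.
Qed.

Lemma dens0_pos (t : R) : -1 < t < 1 -> 0 < dens0 p k t.
Proof.
  intros Ht. rewrite dens0_eq. apply Rmult_lt_0_compat.
  - apply pow_lt, sqrt_lt_R0. nra.
  - apply exp_pos.
Qed.

Lemma continuous_dens0 (x : R) : continuous (dens0 p k) x.
Proof.
  rewrite dens0_eq. apply continuous_Rmult.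
  - apply continuous_pow, continuous_sqrt_one_sub_sq.
  - apply continuous_exp_scal.
Qed.

Lemma ex_RInt_mul_dens0 (f : R -> R) :
  (forall x, continuous f x) -> ex_RInt (fun t => f t * dens0 p k t) (-1) 1.
Proof.
  intros Hf. apply (@ex_RInt_continuous R_CompleteNormedModule). intros x _.
  apply continuous_Rmult; [apply Hf | apply continuous_dens0].
Qed.

Lemma RInt_quartic_dens0 (c0 c1 c2 c3 c4 : R) :
  RInt (fun t => quartic c0 c1 c2 c3 c4 t * dens0 p k t) (-1) 1 =
  c0 * moment p k 0 + c1 * moment p k 1 + c2 * moment p k 2
  + c3 * moment p k 3 + c4 * moment p k 4.
Proof.
  apply (@is_RInt_unique R_CompleteNormedModule).
  assert (I : forall j, is_RInt (fun t => t ^ j * dens0 p k t) (-1) 1 (moment p k j)).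
  { intros j. apply (@RInt_correct R_CompleteNormedModule), ex_RInt_mul_dens0.
    intros x. apply continuous_pow, continuous_id. }
  assert (S := @is_RInt_plus R_NormedModule _ _ _ _ _ _
    (@is_RInt_plus R_NormedModule _ _ _ _ _ _
      (@is_RInt_plus R_NormedModule _ _ _ _ _ _
        (@is_RInt_plus R_NormedModule _ _ _ _ _ _
          (@is_RInt_scal R_NormedModule _ _ _ c0 _ (I 0%nat))
          (@is_RInt_scal R_NormedModule _ _ _ c1 _ (I 1%nat)))
        (@is_RInt_scal R_NormedModule _ _ _ c2 _ (I 2%nat)))
      (@is_RInt_scal R_NormedModule _ _ _ c3 _ (I 3%nat)))
    (@is_RInt_scal R_NormedModule _ _ _ c4 _ (I 4%nat))).
  revert S. apply (@is_RInt_ext R_NormedModule).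
  intros x _. unfold quartic, plus, scal; simpl. unfold mult; simpl. ring.
Qed.

Lemma Defs_RInt_quartic_dens0 (f : R -> R) (c0 c1 c2 c3 c4 : R) :
  (forall t, f t = quartic c0 c1 c2 c3 c4 t * dens0 p k t) ->
  Defs.RInt f (-1) 1 =
  c0 * moment p k 0 + c1 * moment p k 1 + c2 * moment p k 2
  + c3 * moment p k 3 + c4 * moment p k 4.
Proof.
  intros Hf. rewrite (functional_extensionality _ _ Hf).
  rewrite Defs_RInt_eq_RInt by (apply ex_RInt_mul_dens0, continuous_quartic).
  apply RInt_quartic_dens0.
Qed.

Lemma moment0_pos : 0 < moment p k 0.
Proof.
  apply RInt_gt_0; [lra | |].
  - intros x Hx. rewrite Rmult_1_l. now apply dens0_pos.
  - intros x _. apply continuous_Rmult; [apply continuous_const | apply continuous_dens0].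
Qed.

Lemma RInt_quartic_dens0_nonneg (c0 c1 c2 c3 c4 : R) :
  (forall t, -1 < t < 1 -> 0 <= quartic c0 c1 c2 c3 c4 t) ->
  0 <= RInt (fun t => quartic c0 c1 c2 c3 c4 t * dens0 p k t) (-1) 1.
Proof.
  intros Hq. apply RInt_ge_0; [lra | apply ex_RInt_mul_dens0, continuous_quartic |].
  intros t Ht. apply Rmult_le_pos; [now apply Hq | left; now apply dens0_pos].
Qed.

End Moments.

(* For p = 3 the weight (1 - t^2)^((p-1)/2) has corners at +-1, hence p >= 4 here. *)
Lemma is_derive_stein_weight (p : nat) (x : R) : (4 <= p)%nat ->
  is_derive (fun t => sqrt (1 - t ^ 2) ^ (p - 1)) x
    ((1 - INR p) * x * sqrt (1 - x ^ 2) ^ (p - 3)).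
Proof.
  intros Hp.
  assert (Hin : is_derive (fun t => 1 - t ^ 2) x (-2 * x)) by (auto_derive; auto; ring).
  assert (H := is_derive_comp (fun y => sqrt y ^ (p - 1)) (fun t => 1 - t ^ 2) x _ _
                 (is_derive_sqrt_pow (p - 1) (1 - x ^ 2) ltac:(lia)) Hin).
  replace (p - 1 - 2)%nat with (p - 3)%nat in H by lia.
  rewrite minus_INR in H by lia. simpl INR in H.
  replace ((1 - INR p) * x * sqrt (1 - x ^ 2) ^ (p - 3))
    with (scal (-2 * x) ((INR p - 1) / 2 * sqrt (1 - x ^ 2) ^ (p - 3))); [exact H |].
  unfold scal; simpl; unfold mult; simpl. field.
Qed.

Lemma RInt_stein (p : nat) (k : R) (g dg : R -> R) : (4 <= p)%nat ->
  (forall x, is_derive g x (dg x)) -> (forall x, continuous dg x) ->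
  RInt (fun t => (dg t * (1 - t ^ 2) - (INR p - 1) * t * g t + k * g t * (1 - t ^ 2))
                 * dens0 p k t) (-1) 1 = 0.
Proof.
  intros Hp Hg Hdg.
  set (F := fun t => (dg t * (1 - t ^ 2) - (INR p - 1) * t * g t + k * g t * (1 - t ^ 2))
                     * dens0 p k t).
  set (G := fun t => g t * (sqrt (1 - t ^ 2) ^ (p - 1) * exp (k * t))).
  assert (HG : forall x, -1 <= x <= 1 -> is_derive G x (F x)).
  { intros x Hx.
    assert (He : is_derive (fun t => exp (k * t)) x (k * exp (k * x))) by (auto_derive; auto; ring).
    assert (H := is_derive_mult g _ x _ _ (Hg x)
                   (is_derive_mult _ _ x _ _ (is_derive_stein_weight p x Hp) He Rmult_comm)
                   Rmult_comm).
    replace (F x) with (dg x * (sqrt (1 - x ^ 2) ^ (p - 1) * exp (k * x))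
      + g x * ((1 - INR p) * x * sqrt (1 - x ^ 2) ^ (p - 3) * exp (k * x)
               + sqrt (1 - x ^ 2) ^ (p - 1) * (k * exp (k * x)))); [exact H |].
    unfold F. rewrite dens0_eq by lia.
    replace (p - 1)%nat with (2 + (p - 3))%nat by lia. rewrite pow_add, pow2_sqrt by nra.
    ring. }
  assert (HF : forall x, continuous F x).
  { intros x. unfold F. apply continuous_Rmult; [| apply continuous_dens0; lia].
    assert (Hgc : continuous g x) by (apply (@ex_derive_continuous R_AbsRing R_NormedModule);
                                      eexists; apply Hg).
    assert (Hsq : continuous (fun t : R => 1 - t ^ 2) x)
      by (apply (@ex_derive_continuous R_AbsRing R_NormedModule); auto_derive; auto).
    apply (continuous_plus (fun t => dg t * (1 - t ^ 2) - (INR p - 1) * t * g t)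
                           (fun t => k * g t * (1 - t ^ 2))).
    - apply (continuous_minus (fun t => dg t * (1 - t ^ 2)) (fun t => (INR p - 1) * t * g t)).
      + now apply continuous_Rmult.
      + repeat apply continuous_Rmult; auto using continuous_const, continuous_id.
    - repeat apply continuous_Rmult; auto using continuous_const. }
  assert (HGb : forall x, x ^ 2 = 1 -> G x = 0).
  { intros x Hx. unfold G. rewrite Hx, Rminus_eq_0, sqrt_0, pow_i by lia. ring. }
  assert (I := @is_RInt_derive R_CompleteNormedModule G F (-1) 1
                 (fun x Hx => HG x ltac:(rewrite Rmin_left, Rmax_right in Hx by lra; exact Hx))
                 (fun x _ => HF x)).
  rewrite !HGb in I by ring.
  apply (@is_RInt_unique R_CompleteNormedModule).
  revert I. unfold minus, plus, opp; simpl. now rewrite Ropp_0, Rplus_0_r.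
Qed.

Definition nmoment (p : nat) (k : R) (j : nat) : R := moment p k j / moment p k 0.

Section NormalizedMoments.

Variables (p : nat) (k : R).
Hypothesis hp : (3 <= p)%nat.

Let m (j : nat) := nmoment p k j.

Lemma nmoment_quartic (c0 c1 c2 c3 c4 : R) :
  c0 + c1 * m 1 + c2 * m 2 + c3 * m 3 + c4 * m 4 =
  RInt (fun t => quartic c0 c1 c2 c3 c4 t * dens0 p k t) (-1) 1 / moment p k 0.
Proof.
  rewrite RInt_quartic_dens0 by exact hp. unfold m, nmoment. field.
  apply Rgt_not_eq, moment0_pos, hp.
Qed.

Lemma nmoment_quartic_nonneg (c0 c1 c2 c3 c4 : R) :
  (forall t, -1 < t < 1 -> 0 <= quartic c0 c1 c2 c3 c4 t) ->
  0 <= c0 + c1 * m 1 + c2 * m 2 + c3 * m 3 + c4 * m 4.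
Proof.
  intros Hq. rewrite nmoment_quartic. apply Rdiv_le_0_compat.
  - now apply RInt_quartic_dens0_nonneg.
  - now apply moment0_pos.
Qed.

Lemma variance_pk_nmoment : variance_pk p k = m 2 - m 1 ^ 2.
Proof.
  assert (H0 : moment p k 0 <> 0) by (apply Rgt_not_eq, moment0_pos, hp).
  assert (Hc : c_pk p k = / moment p k 0).
  { unfold c_pk. rewrite (Defs_RInt_quartic_dens0 p k hp _ 1 0 0 0 0)
      by (intros t; unfold quartic; ring).
    field. exact H0. }
  assert (Hmean : mean_pk p k = m 1).
  { unfold mean_pk. rewrite Hc, (Defs_RInt_quartic_dens0 p k hp _ 0 (/ moment p k 0) 0 0 0)
      by (intros t; unfold quartic; ring).
    unfold m, nmoment. field. exact H0. }
  unfold variance_pk. rewrite Hmean, Hc, (Defs_RInt_quartic_dens0 p k hp _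
    (m 1 ^ 2 / moment p k 0) (-2 * m 1 / moment p k 0) (/ moment p k 0) 0 0)
    by (intros t; unfold quartic; field; exact H0).
  unfold m, nmoment. field. exact H0.
Qed.

Lemma nmoment1_bound : -1 <= m 1 <= 1.
Proof.
  split.
  - enough (0 <= 1 + 1 * m 1 + 0 * m 2 + 0 * m 3 + 0 * m 4) by lra.
    apply nmoment_quartic_nonneg. intros t Ht. unfold quartic. lra.
  - enough (0 <= 1 + -1 * m 1 + 0 * m 2 + 0 * m 3 + 0 * m 4) by lra.
    apply nmoment_quartic_nonneg. intros t Ht. unfold quartic. lra.
Qed.

Lemma nmoment2_bound : 0 <= m 2 <= 1.
Proof.
  split.
  - enough (0 <= 0 + 0 * m 1 + 1 * m 2 + 0 * m 3 + 0 * m 4) by lra.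
    apply nmoment_quartic_nonneg. intros t Ht. unfold quartic. nra.
  - enough (0 <= 1 + 0 * m 1 + -1 * m 2 + 0 * m 3 + 0 * m 4) by lra.
    apply nmoment_quartic_nonneg. intros t Ht. unfold quartic. nra.
Qed.

Lemma nmoment_variance_nonneg : 0 <= m 2 - m 1 ^ 2.
Proof.
  enough (0 <= m 1 ^ 2 + -2 * m 1 * m 1 + 1 * m 2 + 0 * m 3 + 0 * m 4) by nra.
  apply nmoment_quartic_nonneg. intros t _.
  replace (quartic _ _ _ _ _ t) with ((t - m 1) ^ 2) by (unfold quartic; ring).
  apply pow2_ge_0.
Qed.

Lemma nmoment_variance_sq_nonneg : 0 <= m 4 - m 2 ^ 2.
Proof.
  enough (0 <= m 2 ^ 2 + 0 * m 1 + -2 * m 2 * m 2 + 0 * m 3 + 1 * m 4) by nra.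
  apply nmoment_quartic_nonneg. intros t _.
  replace (quartic _ _ _ _ _ t) with ((t ^ 2 - m 2) ^ 2) by (unfold quartic; ring).
  apply pow2_ge_0.
Qed.

(* Integrating (t - m1)^2 (4 - (t + m1)^2) >= 0 gives Var(T^2) <= 4 Var(T) - Var(T)^2. *)
Lemma nmoment_variance_sq_le : m 4 - m 2 ^ 2 <= 4 * (m 2 - m 1 ^ 2).
Proof.
  assert (Hm1 := nmoment1_bound).
  enough (0 <= 4 * m 1 ^ 2 - m 1 ^ 4 + -8 * m 1 * m 1 + (4 + 2 * m 1 ^ 2) * m 2
               + 0 * m 3 + -1 * m 4)
    by (assert (0 <= (m 2 - m 1 ^ 2) ^ 2) by apply pow2_ge_0; nra).
  apply nmoment_quartic_nonneg. intros t Ht.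
  replace (quartic _ _ _ _ _ t) with ((t - m 1) ^ 2 * (4 - (t + m 1) ^ 2))
    by (unfold quartic; ring).
  apply Rmult_le_pos; [apply pow2_ge_0 |].
  assert (-2 <= t + m 1 <= 2) by lra. nra.
Qed.

End NormalizedMoments.

Lemma nmoment_stein (p : nat) (k : R) (g dg : R -> R) (c0 c1 c2 c3 c4 : R) : (4 <= p)%nat ->
  (forall x, is_derive g x (dg x)) -> (forall x, continuous dg x) ->
  (forall t, dg t * (1 - t ^ 2) - (INR p - 1) * t * g t + k * g t * (1 - t ^ 2)
             = quartic c0 c1 c2 c3 c4 t) ->
  c0 + c1 * nmoment p k 1 + c2 * nmoment p k 2 + c3 * nmoment p k 3 + c4 * nmoment p k 4 = 0.
Proof.
  intros Hp4 Hg Hdg Hq.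
  rewrite nmoment_quartic by lia. rewrite (RInt_ext _ (fun t =>
    (dg t * (1 - t ^ 2) - (INR p - 1) * t * g t + k * g t * (1 - t ^ 2)) * dens0 p k t))
    by (intros t _; now rewrite Hq).
  rewrite RInt_stein by assumption. unfold Rdiv. apply Rmult_0_l.
Qed.

Lemma stein_variance_defect (P k m1 m2 m3 m4 : R) : 1 < P ->
  k - (P - 1) * m1 - k * m2 = 0 ->
  1 + k * m1 - P * m2 - k * m3 = 0 ->
  2 * m1 + k * m2 - (P + 1) * m3 - k * m4 = 0 ->
  P * (m2 - m1 ^ 2) - 1 =
  k ^ 2 * ((m4 - m2 ^ 2) / (P + 1) - (3 * P - 1) / ((P + 1) * (P - 1) ^ 2) * (1 - m2) ^ 2).
Proof.
  intros HP H1 H2 H3.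
  assert (E1 : m1 = k * (1 - m2) / (P - 1)) by (field_simplify_eq; lra).
  assert (E3 : m3 = (2 * m1 + k * m2 - k * m4) / (P + 1)) by (field_simplify_eq; lra).
  replace (P * (m2 - m1 ^ 2) - 1) with (k * m1 - k * m3 - P * m1 ^ 2) by lra.
  rewrite E3, E1. field. lra.
Qed.

Lemma stein_coef_bound (P : R) : 4 <= P ->
  0 <= (3 * P - 1) / ((P + 1) * (P - 1) ^ 2) <= 8 / P ^ 2.
Proof.
  intros HP. assert (Hden : 0 < (P + 1) * (P - 1) ^ 2) by nra.
  split.
  - apply Rdiv_le_0_compat; lra.
  - apply Rmult_le_reg_r with ((P + 1) * (P - 1) ^ 2 * P ^ 2); [nra |].
    field_simplify; [| nra | lra]. nra.
Qed.

Lemma stein_defect_abs_le (P k V W u c : R) :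
  4 <= P -> 9 * k ^ 2 <= P ^ 2 -> 0 <= u <= 1 -> 0 <= c <= 8 / P ^ 2 -> 0 <= W <= 4 * V ->
  P * V - 1 = k ^ 2 * (W / (P + 1) - c * u) ->
  Rabs (W / (P + 1) - c * u) <= 8 / P ^ 2.
Proof.
  intros HP Hk Hu Hc HW HV. set (B := W / (P + 1) - c * u) in *.
  assert (HP2 : 0 < P ^ 2) by nra.
  apply Rabs_le. split.
  - assert (0 <= W / (P + 1)) by (apply Rdiv_le_0_compat; lra).
    assert (c * u <= c) by nra. unfold B. lra.
  - destruct (Rle_or_lt B 0) as [HB0 | HB0].
    { apply Rle_trans with 0; [exact HB0 | apply Rlt_le, Rdiv_lt_0_compat; lra]. }
    assert (HBW : B * (P + 1) <= W).
    { unfold B. replace ((W / (P + 1) - c * u) * (P + 1)) with (W - c * u * (P + 1))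
        by (field; lra).
      assert (0 <= c * u) by (apply Rmult_le_pos; lra). nra. }
    (* B P (P + 1) <= 4 P V = 4 (1 + k^2 B), and 4 k^2 <= 4 P^2 / 9 *)
    assert (HBP : B * (P * (P + 1) - 4 * k ^ 2) <= 4) by nra.
    apply Rmult_le_reg_r with (P ^ 2); [exact HP2 |].
    replace (8 / P ^ 2 * P ^ 2) with 8 by (field; lra). nra.
Qed.

Lemma INR_ge_4 (p : nat) : (4 <= p)%nat -> 4 <= INR p.
Proof. intros Hp. replace 4 with (INR 4) by (simpl; ring). now apply le_INR. Qed.

Lemma Rabs_sqrt_sub1_le (x : R) : 0 <= x -> Rabs (sqrt x - 1) <= Rabs (x - 1).
Proof.
  intros Hx. assert (Hs := sqrt_pos x).
  replace (x - 1) with ((sqrt x - 1) * (sqrt x + 1)) by (rewrite <- (sqrt_sqrt x Hx) at 3; ring).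
  rewrite Rabs_mult, (Rabs_right (sqrt x + 1)) by lra.
  assert (0 <= Rabs (sqrt x - 1)) by apply Rabs_pos. nra.
Qed.

Lemma nmoment_stein_system (p : nat) (k : R) : (4 <= p)%nat ->
  k - (INR p - 1) * nmoment p k 1 - k * nmoment p k 2 = 0 /\
  1 + k * nmoment p k 1 - INR p * nmoment p k 2 - k * nmoment p k 3 = 0 /\
  2 * nmoment p k 1 + k * nmoment p k 2 - (INR p + 1) * nmoment p k 3
    - k * nmoment p k 4 = 0.
Proof.
  intros Hp. split; [| split].
  - enough (k + -(INR p - 1) * nmoment p k 1 + -k * nmoment p k 2
              + 0 * nmoment p k 3 + 0 * nmoment p k 4 = 0) by lra.
    apply (nmoment_stein p k (fun _ => 1) (fun _ => 0)); auto.
    + intros x. auto_derive; auto; ring.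
    + intros x. apply continuous_const.
    + intros t. unfold quartic. ring.
  - enough (1 + k * nmoment p k 1 + -INR p * nmoment p k 2
              + -k * nmoment p k 3 + 0 * nmoment p k 4 = 0) by lra.
    apply (nmoment_stein p k (fun t => t) (fun _ => 1)); auto.
    + intros x. auto_derive; auto; ring.
    + intros x. apply continuous_const.
    + intros t. unfold quartic. ring.
  - enough (0 + 2 * nmoment p k 1 + k * nmoment p k 2
              + -(INR p + 1) * nmoment p k 3 + -k * nmoment p k 4 = 0) by lra.
    apply (nmoment_stein p k (fun t => t ^ 2) (fun t => 2 * t)); auto.
    + intros x. auto_derive; auto; ring.
    + intros x. apply (@ex_derive_continuous R_AbsRing R_NormedModule). auto_derive. auto.
    + intros t. unfold quartic. ring.
Qed.

Lemma variance_pk_defect (p : nat) (k : R) : (4 <= p)%nat ->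
  INR p * variance_pk p k - 1 =
  k ^ 2 * ((nmoment p k 4 - nmoment p k 2 ^ 2) / (INR p + 1)
           - (3 * INR p - 1) / ((INR p + 1) * (INR p - 1) ^ 2) * (1 - nmoment p k 2) ^ 2).
Proof.
  intros Hp. assert (HP := INR_ge_4 p Hp).
  destruct (nmoment_stein_system p k Hp) as [S0 [S1 S2]].
  rewrite variance_pk_nmoment by lia.
  now apply (stein_variance_defect _ _ _ _ (nmoment p k 3)); [lra | ..].
Qed.

Lemma variance_pk_bound (p : nat) (k : R) : (4 <= p)%nat -> 9 * k ^ 2 <= INR p ^ 2 ->
  Rabs (sqrt (INR p * variance_pk p k) - 1) <= 8 * (k ^ 2 / INR p ^ 2).
Proof.
  intros Hp Hk. assert (Hp3 : (3 <= p)%nat) by lia.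
  assert (HP := INR_ge_4 p Hp).
  assert (HV : 0 <= variance_pk p k)
    by (rewrite variance_pk_nmoment by exact Hp3; now apply nmoment_variance_nonneg).
  apply Rle_trans with (Rabs (INR p * variance_pk p k - 1)); [apply Rabs_sqrt_sub1_le; nra |].
  rewrite (variance_pk_defect p k Hp), Rabs_mult, (Rabs_right (k ^ 2))
    by (apply Rle_ge, pow2_ge_0).
  replace (8 * (k ^ 2 / INR p ^ 2)) with (k ^ 2 * (8 / INR p ^ 2)) by (field; lra).
  apply Rmult_le_compat_l; [apply pow2_ge_0 |].
  apply (stein_defect_abs_le (INR p) k (variance_pk p k)); auto.
  - assert (H2 := nmoment2_bound p k Hp3). split; [apply pow2_ge_0 | nra].
  - now apply stein_coef_bound.
  - rewrite variance_pk_nmoment by exact Hp3.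
    split; [apply nmoment_variance_sq_nonneg | apply nmoment_variance_sq_le]; exact Hp3.
  - now apply variance_pk_defect.
Qed.

Theorem lemmaA6 (p : nat -> nat) (kappa : nat -> R)
  (hp2 : forall n, (2 <= p n)%nat)
  (hpinf : forall M : nat, exists N : nat, forall n, (N <= n)%nat -> (M <= p n)%nat)
  (hkpos : forall n, 0 < kappa n)
  (hko : Un_cv (fun n => kappa n / INR (p n)) 0) :
  exists C : R, exists N : nat, forall n, (N <= n)%nat ->
    Rabs (sqrt (INR (p n) * variance_pk (p n) (kappa n)) - 1)
      <= C * (kappa n ^ 2 / INR (p n) ^ 2).
Proof.
  destruct (hko (1 / 3) ltac:(lra)) as [N1 HN1].
  destruct (hpinf 4%nat) as [N2 HN2].
  exists 8, (Nat.max N1 N2). intros n Hn.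
  assert (Hp4 := HN2 n ltac:(lia)).
  assert (HP : 0 < INR (p n)) by (apply lt_0_INR; lia).
  apply variance_pk_bound; [exact Hp4 |].
  assert (Hratio := HN1 n ltac:(lia)).
  unfold R_dist in Hratio. rewrite Rminus_0_r, Rabs_right in Hratio
    by (apply Rle_ge, Rdiv_le_0_compat; [apply Rlt_le, hkpos | exact HP]).
  assert (Hk : 3 * kappa n < INR (p n)).
  { apply Rmult_lt_compat_r with (r := INR (p n)) in Hratio; [| exact HP].
    unfold Rdiv in Hratio. rewrite Rmult_assoc, Rinv_l in Hratio by lra. lra. }
  specialize (hkpos n). nra.
Qed.
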